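(* Let $n\ge 3$, $0<m<\frac{n-2}{n}$, $\eta_0>0$, $\rho_1>0$, let $\beta<\frac{m\rho_1}{n-2-nm}$ and $\alpha=\frac{2\beta+\rho_1}{1-m}$. Then there exists a constant $\varepsilon>0$ such that the equation $$(f^m/m)_{rr}+\frac{n-1}{r}(f^m/m)_r+\alpha f+\beta r f_r=0,\quad f>0,$$ has a unique radially symmetric solution $f\in C^1([0,\varepsilon);\mathbb{R})\cap C^2((0,\varepsilon);\mathbb{R})$ in $B_\varepsilon$ (i.e. for $0<r<\varepsilon$) which satisfies $f(0)=\eta_0$, $f_r(0)=0$.
   Context: $B_R=\{x\in\mathbb{R}^n:|x|<R\}$; $r=|x|$ and $f_r$ is the radial derivative. *)

From Stdlib Require Import Reals.
From Coquelicot Require Import Coquelicot.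
Open Scope R_scope.

Definition C1_on_Ico (f g : R -> R) (eps : R) : Prop :=
  (forall r, 0 < r < eps -> is_derive f r (g r)) /\
  filterlim (fun h => (f h - f 0) / h) (at_right 0) (locally (g 0)) /\
  (forall r, 0 < r < eps -> continuous g r) /\
  filterlim g (at_right 0) (locally (g 0)).

Definition C2_on_Ioo (f : R -> R) (eps : R) : Prop :=
  forall r, 0 < r < eps -> ex_derive_n f 2 r /\ continuous (Derive_n f 2) r.

Definition radial_sol (n : nat) (m alpha beta eta0 eps : R) (f : R -> R) : Prop :=
  (exists g, C1_on_Ico f g eps /\ g 0 = 0) /\
  C2_on_Ioo f eps /\
  (forall r, 0 <= r < eps -> 0 < f r) /\
  f 0 = eta0 /\
  (forall r, 0 < r < eps ->
     let u := fun s => Rpower (f s) m / m in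
     Derive_n u 2 r + (INR n - 1) / r * Derive u r
       + alpha * f r + beta * r * Derive f r = 0).

From Stdlib Require Import Reals Lra Lia.
From Coquelicot Require Import Coquelicot.
Open Scope R_scope.

(* Multiplying the equation by r^(n-1) and integrating once from 0, where f_r(0) = 0 kills
   the integration constant, turns it (with c = alpha - n beta) into the first-order equation
     f_r = - f^(1-m) (beta r f + c r^(1-n) \int_0^r t^(n-1) f(t) dt),
   and conversely every positive continuous solution of this reduced equation solves the
   radial equation.  With f clamped into [eta0/2, 2 eta0] the right-hand side is Lipschitz
   for the sup norm, so the reduced equation has a solution near 0 by Picard iteration on a
   short interval, and two positive solutions differ by a function d with
   |d'| <= L (|d| + \int_0^r |d|), which vanishes since
   (d^2 + (\int_0^r |d|)^2) e^(-(3L+1) r) is nonnegative, nonincreasing and 0 at r = 0. *)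

(** * Real-analysis preliminaries *)

Lemma continuous_epsilon_delta (f : R -> R) x :
  continuous f x <->
  forall e, 0 < e -> exists d, 0 < d /\ forall y, Rabs (y - x) < d -> Rabs (f y - f x) < e.
Proof.
  split.
  - intros Hf e He.
    destruct (proj1 (filterlim_locally (F := locally x) f (f x)) Hf (mkposreal e He))
      as [[d Hd] Hy].
    exists d; split; [exact Hd | intros y Hyd; exact (Hy y Hyd)].
  - intros H. apply (filterlim_locally (F := locally x) f (f x)). intros [e He].
    destruct (H e He) as [d [Hd Hy]].
    exists (mkposreal d Hd). intros y Hyd. exact (Hy y Hyd).
Qed.

Lemma at_right0_epsilon_delta (g : R -> R) l :
  filterlim g (at_right 0) (locally l) <->
  forall e, 0 < e -> exists d, 0 < d /\ forall h, 0 < h < d -> Rabs (g h - l) < e.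
Proof.
  assert (Hball : forall (d : posreal) h, 0 < h -> (ball 0 d h <-> h < d)).
  { intros d h Hh. cbn. unfold AbsRing_ball, abs, minus, plus, opp; cbn.
    rewrite Ropp_0, Rplus_0_r, Rabs_right by lra. tauto. }
  split.
  - intros Hg e He.
    destruct (proj1 (filterlim_locally (F := at_right 0) g l) Hg (mkposreal e He))
      as [d Hy].
    exists d; split; [apply cond_pos|]. intros h [Hh Hhd].
    apply (Hy h); [apply Hball|]; auto.
  - intros H. apply (filterlim_locally (F := at_right 0) g l). intros [e He].
    destruct (H e He) as [d [Hd Hy]].
    exists (mkposreal d Hd). intros h Hhd Hh. apply Hy. split; [exact Hh|].
    apply (Hball (mkposreal d Hd)); auto.
Qed.

Lemma at_right0_lim_of_linear_bound (g : R -> R) l K d :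
  0 < d -> (forall s, 0 < s < d -> Rabs (g s - l) <= K * s) ->
  filterlim g (at_right 0) (locally l).
Proof.
  intros Hd Hg. apply at_right0_epsilon_delta. intros e He.
  assert (HK : 0 < Rabs K + 1) by (pose proof (Rabs_pos K); lra).
  exists (Rmin d (e / (Rabs K + 1))). split.
  { apply Rmin_glb_lt; [lra | apply Rdiv_lt_0_compat; lra]. }
  intros s [Hs Hsmin].
  assert (Hsd : s < d) by (eapply Rlt_le_trans; [exact Hsmin | apply Rmin_l]).
  assert (Hse : s < e / (Rabs K + 1)) by (eapply Rlt_le_trans; [exact Hsmin | apply Rmin_r]).
  apply (Rmult_lt_compat_r (Rabs K + 1)) in Hse; [|lra].
  unfold Rdiv in Hse. rewrite Rmult_assoc, Rinv_l, Rmult_1_r in Hse by lra.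
  pose proof (Hg s (conj Hs Hsd)). pose proof (Rle_abs K). nra.
Qed.

Lemma at_right0_continuous_of_diff_quotient (g : R -> R) l :
  filterlim (fun h => (g h - g 0) / h) (at_right 0) (locally l) ->
  filterlim g (at_right 0) (locally (g 0)).
Proof.
  intros Hq. destruct (proj1 (at_right0_epsilon_delta _ _) Hq 1 Rlt_0_1) as [d [Hd Hqd]].
  apply (at_right0_lim_of_linear_bound g (g 0) (Rabs l + 1) d Hd). intros s Hs.
  replace (g s - g 0) with (s * ((g s - g 0) / s)) by (field; lra).
  rewrite Rabs_mult, Rabs_right, Rmult_comm by lra. apply Rmult_le_compat_r; [lra|].
  specialize (Hqd s Hs). pose proof (Rabs_triang_inv ((g s - g 0) / s) l). lra.
Qed.

Lemma locally_of_interval a b x (P : R -> Prop) :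
  a < x < b -> (forall y, a < y < b -> P y) -> locally x P.
Proof.
  intros Hx HP. assert (Hd : 0 < Rmin (x - a) (b - x)) by (apply Rmin_glb_lt; lra).
  exists (mkposreal _ Hd). intros y Hy. apply HP.
  cbn in Hy. unfold AbsRing_ball, abs, minus, plus, opp in Hy; cbn in Hy.
  pose proof (Rmin_l (x - a) (b - x)). pose proof (Rmin_r (x - a) (b - x)).
  apply Rabs_def2 in Hy. lra.
Qed.

Lemma continuous_of_is_derive (f : R -> R) x l : is_derive f x l -> continuous f x.
Proof.
  intros Hf. apply (ex_derive_continuous (K := R_AbsRing) (V := R_NormedModule)).
  exists l. exact Hf.
Qed.

Lemma continuous_Rplus (f g : R -> R) x :
  continuous f x -> continuous g x -> continuous (fun y => f y + g y) x.
Proof. apply (continuous_plus f g). Qed.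

Lemma continuous_Rminus (f g : R -> R) x :
  continuous f x -> continuous g x -> continuous (fun y => f y - g y) x.
Proof. apply (continuous_minus f g). Qed.

Lemma continuous_Rmult (f g : R -> R) x :
  continuous f x -> continuous g x -> continuous (fun y => f y * g y) x.
Proof. apply (continuous_mult f g). Qed.

Lemma continuous_Ropp (f : R -> R) x : continuous f x -> continuous (fun y => - f y) x.
Proof. apply (continuous_opp f). Qed.

Lemma continuous_Rabs_comp (f : R -> R) x : continuous f x -> continuous (fun y => Rabs (f y)) x.
Proof. intros Hf. apply (continuous_comp f Rabs); [exact Hf | apply continuous_Rabs]. Qed.

Lemma continuous_pow (f : R -> R) k x : continuous f x -> continuous (fun y => f y ^ k) x.
Proof.
  intros Hf. induction k as [|k IHk]; cbn.
  - apply continuous_const.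
  - apply continuous_Rmult; assumption.
Qed.

Lemma continuous_Rdiv (f g : R -> R) x :
  continuous f x -> continuous g x -> g x <> 0 -> continuous (fun y => f y / g y) x.
Proof.
  intros Hf Hg Hx. apply continuous_Rmult; [exact Hf|].
  apply (continuous_comp g Rinv); [exact Hg|].
  apply continuity_pt_filterlim, continuity_pt_inv; [apply continuity_pt_id | exact Hx].
Qed.

Lemma continuous_exp_comp (f : R -> R) x : continuous f x -> continuous (fun y => exp (f y)) x.
Proof.
  intros Hf. apply (continuous_comp f exp); [exact Hf|].
  apply continuity_pt_filterlim, derivable_continuous_pt, derivable_pt_exp.
Qed.

Lemma continuous_Rpower_comp (f : R -> R) p x :
  continuous f x -> 0 < f x -> continuous (fun y => Rpower (f y) p) x.
Proof.
  intros Hf Hx. apply (continuous_comp f (fun y => Rpower y p)); [exact Hf|].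
  apply (continuous_of_is_derive _ _ (p * Rpower (f x) (p - 1))).
  apply is_derive_Reals, derivable_pt_lim_power, Hx.
Qed.

Ltac continuity_step :=
  match goal with
  | |- continuous (fun _ => ?c) _ => apply continuous_const
  | |- continuous (fun y => y) _ => apply continuous_id
  | |- continuous (fun y => @?a y + @?b y) _ => apply (continuous_Rplus a b)
  | |- continuous (fun y => @?a y - @?b y) _ => apply (continuous_Rminus a b)
  | |- continuous (fun y => @?a y * @?b y) _ => apply (continuous_Rmult a b)
  | |- continuous (fun y => - @?a y) _ => apply (continuous_Ropp a)
  | |- continuous (fun y => @?a y ^ ?k) _ => apply (continuous_pow a k)
  | |- continuous (fun y => Rabs (@?a y)) _ => apply (continuous_Rabs_comp a)
  | |- continuous (fun y => @?a y / @?b y) _ => apply (continuous_Rdiv a b)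
  | |- continuous (fun y => Rpower (@?a y) ?p) _ => apply (continuous_Rpower_comp a p)
  | |- continuous (fun y => exp (@?a y)) _ => apply (continuous_exp_comp a)
  | |- continuous (fun y => ?f y) ?x => change (continuous f x)
  | H : continuous ?f ?x |- continuous ?f ?x => exact H
  | H : forall z, continuous ?f z |- continuous ?f _ => apply H
  end.

Lemma ex_RInt_continuous_R (h : R -> R) a b : (forall z, continuous h z) -> ex_RInt h a b.
Proof.
  intros Hh. apply (ex_RInt_continuous (V := R_CompleteNormedModule)). intros z _. apply Hh.
Qed.

Lemma is_derive_primitive (h : R -> R) a x :
  (forall z, continuous h z) -> is_derive (fun y => RInt h a y) x (h x).
Proof.
  intros Hh. apply (is_derive_RInt h (fun y => RInt h a y) a x); [|apply Hh].
  apply filter_forall. intros b. apply (RInt_correct (V := R_CompleteNormedModule)).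
  apply ex_RInt_continuous_R, Hh.
Qed.

Lemma continuous_primitive (h : R -> R) a x :
  (forall z, continuous h z) -> continuous (fun y => RInt h a y) x.
Proof. intros Hh. eapply continuous_of_is_derive, is_derive_primitive, Hh. Qed.

Lemma RInt_point_R (f : R -> R) a : RInt f a a = 0.
Proof. exact (RInt_point (V := R_CompleteNormedModule) a f). Qed.

Lemma RInt_minus_R (f g : R -> R) a b : ex_RInt f a b -> ex_RInt g a b ->
  RInt (fun x => f x - g x) a b = RInt f a b - RInt g a b.
Proof. exact (RInt_minus (V := R_CompleteNormedModule) f g a b). Qed.

Lemma RInt_scal_R (f : R -> R) a b l : ex_RInt f a b ->
  RInt (fun x => l * f x) a b = l * RInt f a b.
Proof. exact (RInt_scal (V := R_CompleteNormedModule) f a b l). Qed.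

Definition clamp (a b x : R) : R := Rmax a (Rmin b x).

Lemma clamp_bounds a b x : a <= b -> a <= clamp a b x <= b.
Proof. intros; unfold clamp, Rmax, Rmin; repeat destruct Rle_dec; lra. Qed.

Lemma clamp_id a b x : a <= x <= b -> clamp a b x = x.
Proof. intros; unfold clamp, Rmax, Rmin; repeat destruct Rle_dec; lra. Qed.

Lemma clamp_1_lipschitz a b x y : a <= b -> Rabs (clamp a b y - clamp a b x) <= Rabs (y - x).
Proof.
  intros; unfold clamp, Rmax, Rmin; repeat destruct Rle_dec;
    unfold Rabs; repeat destruct Rcase_abs; lra.
Qed.

Lemma continuous_clamp a b x : a <= b -> continuous (clamp a b) x.
Proof.
  intros Hab. apply continuous_epsilon_delta. intros e He.
  exists e; split; [exact He|]. intros y Hy.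
  eapply Rle_lt_trans; [apply clamp_1_lipschitz|]; assumption.
Qed.

Lemma continuous_comp_clamp0 (h : R -> R) t eps :
  0 < t < eps -> (forall r, 0 < r < eps -> continuous h r) ->
  filterlim h (at_right 0) (locally (h 0)) ->
  forall z, continuous (fun x => h (clamp 0 t x)) z.
Proof.
  intros Ht Hc Hr z. apply continuous_epsilon_delta. intros e He.
  set (w := clamp 0 t z). assert (Hw : 0 <= w <= t) by (apply clamp_bounds; lra).
  assert (Hwithin : exists d, 0 < d /\
            forall u, 0 <= u <= t -> Rabs (u - w) < d -> Rabs (h u - h w) < e).
  { destruct (Req_dec w 0) as [Hw0|Hw0].
    - destruct (proj1 (at_right0_epsilon_delta h (h 0)) Hr e He) as [d [Hd Hy]].
      exists d; split; [exact Hd|]. intros u Hu Hud. rewrite Hw0 in *.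
      destruct (Req_dec u 0) as [->|Hu0]; [rewrite Rminus_diag, Rabs_R0; lra|].
      apply Hy. rewrite Rminus_0_r, Rabs_right in Hud; lra.
    - destruct (proj1 (continuous_epsilon_delta h w) (Hc w ltac:(lra)) e He)
        as [d [Hd Hy]].
      exists d; split; [exact Hd|]. intros u _ Hud. exact (Hy u Hud). }
  destruct Hwithin as [d [Hd Hy]]. exists d; split; [exact Hd|]. intros y Hyz.
  apply Hy; [apply clamp_bounds; lra|].
  eapply Rle_lt_trans; [apply clamp_1_lipschitz; lra | exact Hyz].
Qed.

Lemma Rpower_pos a p : 0 < Rpower a p.
Proof. apply exp_pos. Qed.

Lemma Rpower_le_l_nonpos a b p : p <= 0 -> 0 < a <= b -> Rpower b p <= Rpower a p.
Proof.
  intros Hp Hab. replace p with (- (- p)) by ring.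
  rewrite (Rpower_Ropp a (- p)), (Rpower_Ropp b (- p)).
  apply Rinv_le_contravar; [apply Rpower_pos | apply Rle_Rpower_l; lra].
Qed.

Lemma Rpower_sub_le_concave a b p : 0 < p < 1 -> 0 < b <= a ->
  0 <= Rpower a p - Rpower b p <= Rpower a (p - 1) * (a - b).
Proof.
  intros Hp Hab.
  assert (Hsplit : forall x, 0 < x -> Rpower x p = x * Rpower x (p - 1)).
  { intros x Hx. rewrite <- (Rpower_1 x) at 2 by exact Hx.
    rewrite <- Rpower_plus. f_equal; ring. }
  assert (Rpower b p <= Rpower a p) by (apply Rle_Rpower_l; lra).
  assert (Rpower a (p - 1) <= Rpower b (p - 1)) by (apply Rpower_le_l_nonpos; lra).
  pose proof (Rpower_pos a (p - 1)).
  rewrite (Hsplit a), (Hsplit b) in * by lra. nra.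
Qed.

Lemma Rpower_lipschitz lo a b p : 0 < p < 1 -> 0 < lo <= a -> 0 < b ->
  Rabs (Rpower a p - Rpower b p) <= Rpower lo (p - 1) * Rabs (a - b).
Proof.
  intros Hp Ha Hb. destruct (Rle_dec b a).
  - pose proof (Rpower_sub_le_concave a b p Hp ltac:(lra)).
    assert (Rpower a (p - 1) <= Rpower lo (p - 1)) by (apply Rpower_le_l_nonpos; lra).
    rewrite !Rabs_right by lra. nra.
  - pose proof (Rpower_sub_le_concave b a p Hp ltac:(lra)).
    assert (Rpower b (p - 1) <= Rpower lo (p - 1)) by (apply Rpower_le_l_nonpos; lra).
    rewrite Rabs_left1, Rabs_left by lra. nra.
Qed.

Lemma is_derive_Rpower_comp (g : R -> R) q s dg : 0 < g s -> is_derive g s dg ->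
  is_derive (fun x => Rpower (g x) q) s (q * Rpower (g s) (q - 1) * dg).
Proof.
  intros Hg Hdg.
  pose proof (is_derive_comp (fun y => Rpower y q) g s _ _
                (proj2 (is_derive_Reals _ _ _) (derivable_pt_lim_power _ q Hg)) Hdg) as H.
  rewrite Rmult_comm. exact H.
Qed.

Lemma is_derive_Rpower_div (g : R -> R) m s dg : m <> 0 -> 0 < g s -> is_derive g s dg ->
  is_derive (fun x => Rpower (g x) m / m) s (Rpower (g s) (m - 1) * dg).
Proof.
  intros Hm Hg Hdg.
  apply (is_derive_ext (fun x => / m * Rpower (g x) m)); [intros; apply Rmult_comm|].
  replace (Rpower (g s) (m - 1) * dg) with (/ m * (m * Rpower (g s) (m - 1) * dg))
    by (field; exact Hm).
  apply is_derive_scal, is_derive_Rpower_comp; assumption.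
Qed.

(** * The reduced equation *)

Definition radial_integral (n : nat) (f : R -> R) (r : R) : R :=
  RInt (fun t => t ^ (n - 1) * f t) 0 r.

(* At r = 0 the quotient is 0 / 0, which Rocq evaluates to 0, its limit. *)
Definition flux (n : nat) (beta c : R) (f : R -> R) (r : R) : R :=
  beta * r * f r + c * (radial_integral n f r / r ^ (n - 1)).

Definition reduced_rhs (n : nat) (beta c p : R) (f : R -> R) (r : R) : R :=
  Rpower (f r) p * flux n beta c f r.

Definition reduced_ode (n : nat) (beta c p eps : R) (f : R -> R) : Prop :=
  forall r, 0 < r < eps -> is_derive f r (- reduced_rhs n beta c p f r).

Lemma flux_0 n beta c f : flux n beta c f 0 = 0.
Proof. unfold flux, radial_integral. rewrite RInt_point_R. unfold Rdiv. ring. Qed.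

Lemma flux_ext n beta c (f g : R -> R) r :
  (forall t, f t = g t) -> flux n beta c f r = flux n beta c g r.
Proof.
  intros Hfg. unfold flux, radial_integral. rewrite Hfg.
  do 3 f_equal. apply RInt_ext. intros t _. rewrite Hfg. reflexivity.
Qed.

Lemma continuous_radial_weight n (f : R -> R) :
  (forall z, continuous f z) -> forall z, continuous (fun t => t ^ (n - 1) * f t) z.
Proof. intros Hf z. repeat continuity_step. Qed.

Lemma is_derive_radial_integral n (f : R -> R) r : (forall z, continuous f z) ->
  is_derive (radial_integral n f) r (r ^ (n - 1) * f r).
Proof.
  intros Hf. apply (is_derive_primitive (fun t => t ^ (n - 1) * f t)).
  apply continuous_radial_weight, Hf.
Qed.

Lemma continuous_radial_integral n (f : R -> R) r : (forall z, continuous f z) ->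
  continuous (radial_integral n f) r.
Proof.
  intros Hf. eapply continuous_of_is_derive, is_derive_radial_integral, Hf.
Qed.

Lemma radial_integral_minus n (f g : R -> R) x :
  (forall z, continuous f z) -> (forall z, continuous g z) ->
  radial_integral n f x - radial_integral n g x = radial_integral n (fun t => f t - g t) x.
Proof.
  intros Hf Hg. unfold radial_integral.
  rewrite <- RInt_minus_R by (apply ex_RInt_continuous_R, continuous_radial_weight; assumption).
  apply RInt_ext. intros; cbn; ring.
Qed.

Lemma radial_mean_le n (h : R -> R) x : 0 < x -> (forall z, continuous h z) ->
  Rabs (radial_integral n h x / x ^ (n - 1)) <= RInt (fun t => Rabs (h t)) 0 x.
Proof.
  intros Hx Hh. assert (Hxn : 0 < x ^ (n - 1)) by (apply pow_lt; lra).
  assert (Hcabs : forall z, continuous (fun t => Rabs (h t)) z)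
    by (intros; repeat continuity_step).
  assert (H : Rabs (radial_integral n h x) <= x ^ (n - 1) * RInt (fun t => Rabs (h t)) 0 x).
  { eapply Rle_trans.
    { apply abs_RInt_le; [lra | apply ex_RInt_continuous_R, continuous_radial_weight, Hh]. }
    rewrite <- RInt_scal_R by (apply ex_RInt_continuous_R, Hcabs).
    apply RInt_le; [lra | | |].
    - apply ex_RInt_continuous_R. intros z.
      apply continuous_Rabs_comp, continuous_radial_weight, Hh.
    - apply ex_RInt_continuous_R. intros z. repeat continuity_step.
    - intros t Ht. rewrite Rabs_mult, <- RPow_abs, Rabs_right by lra.
      apply Rmult_le_compat_r; [apply Rabs_pos | apply pow_incr; lra]. }
  unfold Rdiv. rewrite Rabs_mult, Rabs_inv, (Rabs_right (x ^ _)) by lra.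
  apply (Rmult_le_reg_r (x ^ (n - 1))); [exact Hxn|].
  rewrite Rmult_assoc, Rinv_l by lra. lra.
Qed.

Lemma flux_le n beta c (f : R -> R) s B : 0 < s -> (forall z, continuous f z) ->
  (forall t, 0 <= t <= s -> Rabs (f t) <= B) ->
  Rabs (flux n beta c f s) <= (Rabs beta + Rabs c) * s * B.
Proof.
  intros Hs Hf HB.
  assert (Hmean : Rabs (radial_integral n f s / s ^ (n - 1)) <= s * B).
  { eapply Rle_trans; [apply radial_mean_le; assumption|].
    eapply Rle_trans; [apply Rle_abs|].
    replace s with (s - 0) at 2 by ring.
    apply abs_RInt_le_const; [lra | | intros t Ht; rewrite Rabs_Rabsolu; apply HB; lra].
    apply ex_RInt_continuous_R. intros z. repeat continuity_step. }
  unfold flux. eapply Rle_trans; [apply Rabs_triang|]. rewrite !Rabs_mult, (Rabs_right s) by lra.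
  pose proof (HB s ltac:(lra)). pose proof (Rabs_pos beta). pose proof (Rabs_pos c).
  assert (Rabs beta * s * Rabs (f s) <= Rabs beta * s * B)
    by (apply Rmult_le_compat_l; [apply Rmult_le_pos|]; lra).
  assert (Rabs c * Rabs (radial_integral n f s / s ^ (n - 1)) <= Rabs c * (s * B))
    by (apply Rmult_le_compat_l; lra).
  lra.
Qed.

Lemma flux_sub_le n beta c (f g : R -> R) x : 0 < x ->
  (forall z, continuous f z) -> (forall z, continuous g z) ->
  Rabs (flux n beta c f x - flux n beta c g x) <=
  Rabs beta * x * Rabs (f x - g x) + Rabs c * RInt (fun t => Rabs (f t - g t)) 0 x.
Proof.
  intros Hx Hf Hg.
  replace (flux n beta c f x - flux n beta c g x) with
    (beta * x * (f x - g x) + c * (radial_integral n (fun t => f t - g t) x / x ^ (n - 1))).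
  2:{ unfold flux. rewrite <- radial_integral_minus by assumption.
      field. apply pow_nonzero. lra. }
  eapply Rle_trans; [apply Rabs_triang|]. rewrite !Rabs_mult, (Rabs_right x) by lra.
  apply Rplus_le_compat_l, Rmult_le_compat_l; [apply Rabs_pos|].
  apply radial_mean_le; [exact Hx|]. intros z. repeat continuity_step.
Qed.

Lemma continuous_flux n beta c (f : R -> R) s : (forall z, continuous f z) -> s <> 0 ->
  continuous (flux n beta c f) s.
Proof.
  intros Hf Hs. unfold flux. repeat continuity_step.
  - apply continuous_radial_integral, Hf.
  - apply pow_nonzero, Hs.
Qed.

Lemma INR_pow_pred k r : r <> 0 -> INR k * r ^ pred k = INR k * r ^ k / r.
Proof.
  intros Hr. destruct k as [|k]; cbn [pred]; [cbn; field; exact Hr|].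
  rewrite <- tech_pow_Rmult. field. exact Hr.
Qed.

Lemma pow_pred_split n r : (1 <= n)%nat -> r ^ n = r * r ^ (n - 1).
Proof. intros Hn. rewrite tech_pow_Rmult. f_equal. lia. Qed.

Lemma is_derive_flux n beta c (f : R -> R) s df : (1 <= n)%nat ->
  (forall z, continuous f z) -> s <> 0 -> is_derive f s df ->
  is_derive (flux n beta c f) s
    (beta * f s + beta * s * df + c * (f s - INR (n - 1) * radial_integral n f s / s ^ n)).
Proof.
  intros Hn Hf Hs Hdf.
  pose proof (is_derive_radial_integral n f s Hf) as HI.
  unfold flux. set (I := radial_integral n f) in *. clearbody I.
  auto_derive; [repeat split; [eexists; exact Hdf | eexists; exact HI | apply pow_nonzero, Hs]|].
  change (fun x : R => f x) with f. change (fun x : R => I x) with I.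
  rewrite (is_derive_unique _ _ _ Hdf), (is_derive_unique _ _ _ HI), INR_pow_pred,
    (pow_pred_split n s) by assumption.
  field. split; [apply pow_nonzero|]; exact Hs.
Qed.

Lemma continuous_reduced_rhs n beta c p (f : R -> R) x :
  (forall z, continuous f z) -> 0 < f x -> x <> 0 -> continuous (reduced_rhs n beta c p f) x.
Proof.
  intros Hf Hx Hx0. unfold reduced_rhs. apply continuous_Rmult.
  - apply continuous_Rpower_comp; [apply Hf | exact Hx].
  - apply continuous_flux; assumption.
Qed.

Lemma reduced_rhs_le n beta c p (f : R -> R) s hi : 0 < p -> 0 <= s ->
  (forall z, continuous f z) -> (forall t, 0 <= t <= s -> 0 < f t <= hi) ->
  Rabs (reduced_rhs n beta c p f s) <= Rpower hi p * ((Rabs beta + Rabs c) * hi) * s.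
Proof.
  intros Hp Hs Hf Hb. unfold reduced_rhs.
  destruct (Req_dec s 0) as [->|Hs0].
  { rewrite flux_0, Rmult_0_r, Rabs_R0, Rmult_0_r. lra. }
  pose proof (Hb s ltac:(lra)).
  assert (HA : 0 < Rpower (f s) p <= Rpower hi p)
    by (split; [apply Rpower_pos | apply Rle_Rpower_l; lra]).
  assert (HQ : Rabs (flux n beta c f s) <= (Rabs beta + Rabs c) * s * hi).
  { apply flux_le; [lra | exact Hf |]. intros t Ht. specialize (Hb t Ht).
    rewrite Rabs_right; lra. }
  rewrite Rabs_mult, Rabs_right by lra.
  replace (Rpower hi p * ((Rabs beta + Rabs c) * hi) * s)
    with (Rpower hi p * ((Rabs beta + Rabs c) * s * hi)) by ring.
  apply Rmult_le_compat; [lra | apply Rabs_pos | lra | exact HQ].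
Qed.

Lemma reduced_rhs_lipschitz n beta c p lo hi t : 0 < p < 1 -> 0 < lo <= hi -> 0 < t ->
  exists L, 0 <= L /\ forall (f g : R -> R) x,
    (forall z, continuous f z) -> (forall z, continuous g z) ->
    (forall r, 0 <= r <= t -> lo <= f r <= hi) -> (forall r, 0 <= r <= t -> 0 < g r <= hi) ->
    0 < x <= t ->
    Rabs (reduced_rhs n beta c p f x - reduced_rhs n beta c p g x) <=
    L * (Rabs (f x - g x) + RInt (fun s => Rabs (f s - g s)) 0 x).
Proof.
  intros Hp Hlo Ht.
  pose proof (Rabs_pos beta). pose proof (Rabs_pos c).
  pose proof (Rpower_pos hi p). pose proof (Rpower_pos lo (p - 1)).
  exists (Rpower hi p * (Rabs beta * t + Rabs c)
          + (Rabs beta + Rabs c) * t * hi * Rpower lo (p - 1)).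
  split.
  { apply Rplus_le_le_0_compat; repeat apply Rmult_le_pos; nra. }
  intros f g x Hf Hg Hfb Hgb Hx. unfold reduced_rhs.
  pose proof (Hfb x ltac:(lra)). pose proof (Hgb x ltac:(lra)).
  set (A := Rpower (f x) p). set (B := Rpower (g x) p).
  set (Qf := flux n beta c f x). set (Qg := flux n beta c g x).
  set (d := Rabs (f x - g x)). set (X := RInt (fun s => Rabs (f s - g s)) 0 x).
  assert (Hd : 0 <= d) by apply Rabs_pos.
  assert (HX : 0 <= X).
  { apply RInt_ge_0; [lra | | intros; apply Rabs_pos].
    apply ex_RInt_continuous_R. intros z. repeat continuity_step. }
  assert (HA : 0 < A <= Rpower hi p) by (split; [apply Rpower_pos | apply Rle_Rpower_l; lra]).
  assert (HQ : Rabs (Qf - Qg) <= (Rabs beta * t + Rabs c) * (d + X)).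
  { eapply Rle_trans; [apply flux_sub_le; [lra | exact Hf | exact Hg]|]. fold d X.
    assert (Rabs beta * x * d <= Rabs beta * t * d) by (apply Rmult_le_compat_r; nra).
    assert (0 <= Rabs beta * t * X) by (repeat apply Rmult_le_pos; lra).
    assert (0 <= Rabs c * d) by (apply Rmult_le_pos; lra).
    lra. }
  assert (HQg : Rabs Qg <= (Rabs beta + Rabs c) * t * hi).
  { eapply Rle_trans.
    - apply (flux_le n beta c g x hi); [lra | exact Hg |].
      intros r Hr. specialize (Hgb r ltac:(lra)).
      rewrite Rabs_right; lra.
    - apply Rmult_le_compat_r; [lra|]. apply Rmult_le_compat_l; lra. }
  assert (HAB : Rabs (A - B) <= Rpower lo (p - 1) * d)
    by (apply Rpower_lipschitz; [exact Hp | lra | lra]).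
  replace (A * Qf - B * Qg) with (A * (Qf - Qg) + Qg * (A - B)) by ring.
  eapply Rle_trans; [apply Rabs_triang|]. rewrite !Rabs_mult, (Rabs_right A) by lra.
  assert (A * Rabs (Qf - Qg) <= Rpower hi p * ((Rabs beta * t + Rabs c) * (d + X)))
    by (apply Rmult_le_compat; [lra | apply Rabs_pos | lra | exact HQ]).
  assert (Rabs Qg * Rabs (A - B) <= (Rabs beta + Rabs c) * t * hi * (Rpower lo (p - 1) * d))
    by (apply Rmult_le_compat; [apply Rabs_pos | apply Rabs_pos | exact HQg | exact HAB]).
  assert (0 <= (Rabs beta + Rabs c) * t * hi * Rpower lo (p - 1) * X)
    by (repeat apply Rmult_le_pos; nra).
  nra.
Qed.

(** * Radial solutions and the reduced equation *)

Section ReducedToRadial.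

Variables (n : nat) (m alpha beta eps lo hi : R) (phi : R -> R).
Hypothesis n_pos : (1 <= n)%nat.
Hypothesis m_range : 0 < m < 1.
Hypothesis eps_pos : 0 < eps.
Hypothesis lo_pos : 0 < lo.
Hypothesis phi_continuous : forall z, continuous phi z.
Hypothesis phi_bounds : forall r, 0 <= r < eps -> lo <= phi r <= hi.
Hypothesis phi_ode : reduced_ode n beta (alpha - INR n * beta) (1 - m) eps phi.

Let c := alpha - INR n * beta.
Let G r := - reduced_rhs n beta c (1 - m) phi r.

Let phi_pos r : 0 <= r < eps -> 0 < phi r.
Proof. intros Hr. specialize (phi_bounds r Hr). lra. Qed.

Let Derive_phi r : 0 < r < eps -> Derive phi r = G r.
Proof. intros Hr. apply is_derive_unique, phi_ode, Hr. Qed.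

Lemma reduced_slope_0 : G 0 = 0.
Proof. unfold G, reduced_rhs. rewrite flux_0. ring. Qed.

Lemma reduced_slope_linear_bound :
  exists K, 0 <= K /\ forall s, 0 <= s < eps -> Rabs (G s) <= K * s.
Proof.
  exists (Rpower hi (1 - m) * ((Rabs beta + Rabs c) * hi)). split.
  - pose proof (Rabs_pos beta). pose proof (Rabs_pos c). pose proof (Rpower_pos hi (1 - m)).
    pose proof (phi_bounds 0 ltac:(lra)). apply Rmult_le_pos; nra.
  - intros s Hs. unfold G. rewrite Rabs_Ropp.
    apply reduced_rhs_le; [lra | lra | exact phi_continuous |].
    intros t Ht. specialize (phi_bounds t ltac:(lra)). lra.
Qed.

Lemma continuous_reduced_slope r : 0 < r < eps -> continuous G r.
Proof.
  intros Hr. apply continuous_Ropp, continuous_reduced_rhs;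
    [exact phi_continuous | apply phi_pos | ]; lra.
Qed.

Lemma reduced_ode_C1 : C1_on_Ico phi G eps.
Proof.
  pose proof reduced_slope_0 as HG0.
  destruct reduced_slope_linear_bound as [K [HK HGK]].
  split; [|split; [|split]].
  - exact phi_ode.
  - rewrite HG0. apply (at_right0_lim_of_linear_bound _ 0 K eps eps_pos). intros h Hh.
    destruct (MVT_gen phi 0 h G) as [xi [Hxi Hmvt]];
      rewrite ?Rmin_left, ?Rmax_right in * by lra.
    + intros x Hx. apply phi_ode. lra.
    + intros x _. apply continuity_pt_filterlim, phi_continuous.
    + replace ((phi h - phi 0) / h - 0) with (G xi) by (rewrite Hmvt; field; lra).
      eapply Rle_trans; [apply HGK; lra | apply Rmult_le_compat_l; lra].
  - exact continuous_reduced_slope.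
  - rewrite HG0. apply (at_right0_lim_of_linear_bound _ 0 K eps eps_pos). intros s Hs.
    rewrite Rminus_0_r. apply HGK. lra.
Qed.

Lemma reduced_ode_C2 : C2_on_Ioo phi eps.
Proof.
  set (dflux s := beta * phi s + beta * s * G s
                  + c * (phi s - INR (n - 1) * radial_integral n phi s / s ^ n)).
  set (G2 s := - ((1 - m) * Rpower (phi s) (1 - m - 1) * G s * flux n beta c phi s
                  + Rpower (phi s) (1 - m) * dflux s)).
  assert (HG2 : forall r, 0 < r < eps -> is_derive G r (G2 r)).
  { intros r Hr. unfold G, G2, reduced_rhs.
    apply (is_derive_opp (fun x => Rpower (phi x) (1 - m) * flux n beta c phi x)).
    apply (is_derive_mult (fun x => Rpower (phi x) (1 - m)) (flux n beta c phi));
      [ apply is_derive_Rpower_comp; [apply phi_pos; lra | apply phi_ode, Hr]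
      | apply is_derive_flux; [exact n_pos | exact phi_continuous | lra | apply phi_ode, Hr]
      | intros; apply Rmult_comm ]. }
  assert (HDphi : forall r, 0 < r < eps -> locally r (fun y => Derive phi y = G y)).
  { intros r Hr. apply (locally_of_interval 0 eps); [exact Hr|]. exact Derive_phi. }
  intros r Hr. split.
  - apply (ex_derive_ext_loc G); [|eexists; apply HG2, Hr].
    apply (filter_imp _ _ (fun y Hy => eq_sym Hy) (HDphi r Hr)).
  - apply (continuous_ext_loc _ G2).
    + apply (locally_of_interval 0 eps); [exact Hr|]. intros y Hy.
      change (G2 y = Derive (Derive phi) y).
      rewrite (Derive_ext_loc _ _ y (HDphi y Hy)).
      symmetry. apply is_derive_unique, HG2, Hy.
    + unfold G2, dflux.
      assert (Hpos : 0 < phi r) by (apply phi_pos; lra).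
      pose proof (continuous_reduced_slope r Hr).
      repeat continuity_step; try exact Hpos.
      * apply continuous_flux; [exact phi_continuous | lra].
      * apply continuous_radial_integral, phi_continuous.
      * apply pow_nonzero. lra.
Qed.

Lemma reduced_ode_radial_equation r : 0 < r < eps ->
  let u := fun s => Rpower (phi s) m / m in
  Derive_n u 2 r + (INR n - 1) / r * Derive u r + alpha * phi r + beta * r * Derive phi r = 0.
Proof.
  intros Hr u.
  assert (HDu : forall s, 0 < s < eps -> Derive u s = - flux n beta c phi s).
  { intros s Hs. apply is_derive_unique.
    replace (- flux n beta c phi s) with (Rpower (phi s) (m - 1) * G s).
    - apply is_derive_Rpower_div; [lra | apply phi_pos; lra | apply phi_ode, Hs].
    - unfold G, reduced_rhs.
      replace (Rpower (phi s) (m - 1) * - (Rpower (phi s) (1 - m) * flux n beta c phi s))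
        with (- (Rpower (phi s) (m - 1 + (1 - m)) * flux n beta c phi s))
        by (rewrite Rpower_plus; ring).
      replace (m - 1 + (1 - m)) with 0 by ring. rewrite Rpower_O by (apply phi_pos; lra). ring. }
  assert (HD2u : Derive_n u 2 r =
    - (beta * phi r + beta * r * G r
       + c * (phi r - INR (n - 1) * radial_integral n phi r / r ^ n))).
  { change (Derive_n u 2 r) with (Derive (Derive u) r).
    rewrite (Derive_ext_loc _ (fun s => - flux n beta c phi s) r)
      by (apply (locally_of_interval 0 eps); [exact Hr | exact HDu]).
    apply is_derive_unique, (is_derive_opp (flux n beta c phi)).
    apply is_derive_flux; [exact n_pos | exact phi_continuous | lra | apply phi_ode, Hr]. }
  rewrite HD2u, HDu, Derive_phi, minus_INR, (pow_pred_split n r) by (auto; lra).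
  unfold c, flux. cbn [INR]. field. split; [apply pow_nonzero|]; lra.
Qed.

Lemma reduced_ode_radial_sol eta0 : phi 0 = eta0 -> radial_sol n m alpha beta eta0 eps phi.
Proof.
  intros Hphi0. split; [|split; [|split; [|split]]].
  - exists G. split; [exact reduced_ode_C1 | exact reduced_slope_0].
  - exact reduced_ode_C2.
  - exact phi_pos.
  - exact Hphi0.
  - exact reduced_ode_radial_equation.
Qed.

End ReducedToRadial.

Section RadialToReduced.

Variables (n : nat) (m alpha beta eps t : R) (g G : R -> R).
Hypothesis n_pos : (1 <= n)%nat.
Hypothesis m_pos : 0 < m.
Hypothesis t_range : 0 < t < eps.
Hypothesis g_derive : forall r, 0 < r < eps -> is_derive g r (G r).
Hypothesis g_right_continuous : filterlim g (at_right 0) (locally (g 0)).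
Hypothesis G_continuous : forall r, 0 < r < eps -> continuous G r.
Hypothesis G_right_continuous : filterlim G (at_right 0) (locally (G 0)).
Hypothesis G_0 : G 0 = 0.
Hypothesis g_C2 : C2_on_Ioo g eps.
Hypothesis g_pos : forall r, 0 <= r < eps -> 0 < g r.
Hypothesis g_equation : forall r, 0 < r < eps ->
  let u := fun s => Rpower (g s) m / m in
  Derive_n u 2 r + (INR n - 1) / r * Derive u r + alpha * g r + beta * r * Derive g r = 0.

Let c := alpha - INR n * beta.
(* g is only known on [0, eps); the integral operators need a function continuous on R. *)
Let gh x := g (clamp 0 t x).
Let u s := Rpower (g s) m / m.

Lemma continuous_clamped_solution z : continuous gh z.
Proof.
  apply (continuous_comp_clamp0 g t eps t_range); [|exact g_right_continuous].
  intros r Hr. eapply continuous_of_is_derive, g_derive, Hr.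
Qed.

Let clamped_eq x : 0 <= x <= t -> gh x = g x.
Proof. intros Hx. unfold gh. rewrite clamp_id; auto. Qed.

Let Derive_u s : 0 < s < eps -> Derive u s = Rpower (g s) (m - 1) * G s.
Proof.
  intros Hs. apply is_derive_unique, is_derive_Rpower_div;
    [lra | apply g_pos; lra | apply g_derive, Hs].
Qed.

Lemma radial_flux_conservation r : 0 < r < t ->
  is_derive (fun s => s ^ (n - 1) * Derive u s + beta * s ^ n * g s + c * radial_integral n gh s)
    r 0.
Proof.
  intros Hr.
  assert (HDg : forall s, 0 < s < eps -> Derive g s = G s)
    by (intros s Hs; apply is_derive_unique, g_derive, Hs).
  assert (Hu2 : is_derive (Derive u) r (Derive_n u 2 r)).
  { apply Derive_correct.
    apply (ex_derive_ext_loc (fun s => Rpower (g s) (m - 1) * Derive g s)).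
    - apply (locally_of_interval 0 eps); [lra|]. intros y Hy. rewrite Derive_u, HDg; auto.
    - apply ex_derive_mult.
      + eexists. apply is_derive_Rpower_comp; [apply g_pos; lra | apply g_derive; lra].
      + exact (proj1 (g_C2 r ltac:(lra))). }
  pose proof (is_derive_radial_integral n gh r continuous_clamped_solution) as HI.
  pose proof (g_derive r ltac:(lra)) as Hg.
  pose proof (g_equation r ltac:(lra)) as Heq. cbv zeta in Heq. fold u in Heq.
  rewrite clamped_eq in HI by lra.
  set (Du := Derive u) in *. set (I := radial_integral n gh) in *. clearbody Du I.
  auto_derive.
  - repeat split; eexists; eassumption.
  - change (fun x : R => Du x) with Du. change (fun x : R => g x) with g.
    change (fun x : R => I x) with I.
    rewrite (is_derive_unique _ _ _ Hu2), (is_derive_unique _ _ _ HI), (is_derive_unique _ _ _ Hg).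
    rewrite HDg in Heq by lra.
    rewrite !INR_pow_pred, minus_INR, (pow_pred_split n r) in * by (auto; lra).
    cbn [INR] in *.
    replace (Derive_n u 2 r) with (- ((INR n - 1) / r * Du r + alpha * g r + beta * r * G r))
      by lra.
    unfold c. field. lra.
Qed.

Lemma radial_first_integral r : 0 < r < t ->
  r ^ (n - 1) * (Rpower (g r) (m - 1) * G r) + beta * r ^ n * g r
  + c * radial_integral n gh r = 0.
Proof.
  intros Hr.
  set (Gh x := G (clamp 0 t x)).
  set (P s := s ^ (n - 1) * (Rpower (gh s) (m - 1) * Gh s) + beta * s ^ n * gh s
              + c * radial_integral n gh s).
  assert (HGh : forall z, continuous Gh z)
    by (apply (continuous_comp_clamp0 G t eps); assumption).
  assert (Hgh_pos : forall z, 0 < gh z)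
    by (intros z; apply g_pos; pose proof (clamp_bounds 0 t z); lra).
  assert (HP0 : P 0 = 0).
  { unfold P, Gh. rewrite clamp_id, G_0 by lra.
    unfold radial_integral. rewrite RInt_point_R, (pow_i n) by lia. ring. }
  destruct (MVT_gen P 0 r (fun _ => 0)) as [xi [_ Hmvt]];
    rewrite ?Rmin_left, ?Rmax_right in * by lra.
  - intros x Hx.
    apply (is_derive_ext_loc (fun s => s ^ (n - 1) * Derive u s + beta * s ^ n * g s
                                       + c * radial_integral n gh s));
      [|apply radial_flux_conservation; lra].
    apply (locally_of_interval 0 t); [lra|]. intros y Hy.
    unfold P, Gh. rewrite clamped_eq, clamp_id, Derive_u by lra. reflexivity.
  - intros x _. apply continuity_pt_filterlim. change (continuous P x). unfold P.
    repeat continuity_step; auto using continuous_clamped_solution.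
    apply continuous_radial_integral, continuous_clamped_solution.
  - rewrite HP0 in Hmvt. unfold P, Gh in Hmvt. rewrite !clamped_eq, clamp_id in Hmvt by lra.
    lra.
Qed.

Lemma clamped_solution_reduced_ode : reduced_ode n beta c (1 - m) t gh.
Proof.
  intros r Hr.
  assert (Hgr : 0 < g r) by (apply g_pos; lra).
  assert (Hrn : 0 < r ^ (n - 1)) by (apply pow_lt; lra).
  assert (Hinv : Rpower (g r) (1 - m) * Rpower (g r) (m - 1) = 1).
  { rewrite <- Rpower_plus. replace (1 - m + (m - 1)) with 0 by ring. apply Rpower_O, Hgr. }
  assert (Hslope : Rpower (g r) (m - 1) * G r =
                   - (beta * r * g r + c * (radial_integral n gh r / r ^ (n - 1)))).
  { pose proof (radial_first_integral r Hr) as Hfi.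
    rewrite (pow_pred_split n r n_pos) in Hfi. apply (Rmult_eq_reg_l (r ^ (n - 1))); [|lra].
    field_simplify; [lra | lra]. }
  replace (- reduced_rhs n beta c (1 - m) gh r) with (G r).
  - apply (is_derive_ext_loc g); [|apply g_derive; lra].
    apply (locally_of_interval 0 t); [exact Hr|]. intros y Hy. symmetry. apply clamped_eq. lra.
  - unfold reduced_rhs, flux. rewrite clamped_eq by lra.
    transitivity (Rpower (g r) (1 - m) * (Rpower (g r) (m - 1) * G r));
      [rewrite <- Rmult_assoc, Hinv; ring | rewrite Hslope; ring].
Qed.

End RadialToReduced.

Lemma radial_sol_reduced_ode n m alpha beta eta0 eps g t :
  (1 <= n)%nat -> 0 < m -> 0 < t < eps -> radial_sol n m alpha beta eta0 eps g ->
  (forall z, continuous (fun x => g (clamp 0 t x)) z) /\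
  reduced_ode n beta (alpha - INR n * beta) (1 - m) t (fun x => g (clamp 0 t x)).
Proof.
  intros Hn Hm Ht [[G [[Hd [Hq [HGc HGr]]] HG0]] [HC2 [Hpos [_ Heq]]]].
  pose proof (at_right0_continuous_of_diff_quotient g (G 0) Hq) as Hgr.
  split.
  - eapply continuous_clamped_solution; eassumption.
  - eapply clamped_solution_reduced_ode; eassumption.
Qed.

(** * Uniqueness *)

Lemma lyapunov_slope_nonpos a b X L : 0 <= L -> 0 <= X -> Rabs b <= L * (Rabs a + X) ->
  2 * a * b + 2 * X * Rabs a - (3 * L + 1) * (a ^ 2 + X ^ 2) <= 0.
Proof.
  intros HL HX Hb.
  assert (Hab : a * b <= Rabs a * (L * (Rabs a + X))).
  { eapply Rle_trans; [apply Rle_abs|]. rewrite Rabs_mult.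
    apply Rmult_le_compat_l; [apply Rabs_pos | exact Hb]. }
  rewrite <- pow2_abs. pose proof (Rabs_pos a).
  assert (0 <= L * (Rabs a - X) ^ 2) by (apply Rmult_le_pos; [lra | apply pow2_ge_0]).
  assert (0 <= (Rabs a - X) ^ 2) by apply pow2_ge_0.
  assert (0 <= L * X ^ 2) by (apply Rmult_le_pos; [lra | apply pow2_ge_0]).
  nra.
Qed.

Lemma integral_gronwall_zero (d d' : R -> R) L t :
  0 <= L -> (forall z, continuous d z) -> d 0 = 0 ->
  (forall x, 0 < x < t -> is_derive d x (d' x)) ->
  (forall x, 0 < x < t ->
     Rabs (d' x) <= L * (Rabs (d x) + RInt (fun s => Rabs (d s)) 0 x)) ->
  forall x, 0 <= x < t -> d x = 0.
Proof.
  intros HL Hd Hd0 Hder Hbound x Hx.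
  destruct (Req_dec x 0) as [->|Hx0]; [exact Hd0|].
  assert (Habs : forall z, continuous (fun s => Rabs (d s)) z)
    by (intros z; repeat continuity_step).
  set (X y := RInt (fun s => Rabs (d s)) 0 y) in Hbound.
  assert (HX : forall y, is_derive X y (Rabs (d y)))
    by (intros y; apply (is_derive_primitive (fun s => Rabs (d s))), Habs).
  assert (HX0 : forall y, 0 <= y -> 0 <= X y).
  { intros y Hy.
    apply RInt_ge_0; [lra | apply ex_RInt_continuous_R, Habs | intros; apply Rabs_pos]. }
  assert (HXat0 : X 0 = 0) by apply RInt_point_R.
  clearbody X.
  set (k := 3 * L + 1).
  set (H y := (d y ^ 2 + X y ^ 2) * exp (- (k * y))).
  set (dH y := (2 * d y * d' y + 2 * X y * Rabs (d y) - k * (d y ^ 2 + X y ^ 2)) * exp (- (k * y))).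
  destruct (MVT_gen H 0 x dH) as [xi [Hxi Hmvt]]; rewrite ?Rmin_left, ?Rmax_right in * by lra.
  - intros y Hy. unfold H, dH.
    pose proof (Hder y ltac:(lra)) as Hdy. pose proof (HX y) as HXy.
    auto_derive; [repeat split; eexists; eassumption|].
    change (fun x : R => d x) with d. change (fun x : R => X x) with X.
    rewrite (is_derive_unique _ _ _ Hdy), (is_derive_unique _ _ _ HXy). ring.
  - intros y _. apply continuity_pt_filterlim. change (continuous H y). unfold H.
    repeat continuity_step. apply (continuous_of_is_derive X y (Rabs (d y))), HX.
  - assert (HdH : dH xi <= 0).
    { destruct (Req_dec xi 0) as [->|Hxi0].
      - unfold dH. rewrite Hd0, HXat0. lra.
      - pose proof (exp_pos (- (k * xi))).
        assert (2 * d xi * d' xi + 2 * X xi * Rabs (d xi) - k * (d xi ^ 2 + X xi ^ 2) <= 0)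
          by (apply lyapunov_slope_nonpos; [exact HL | apply HX0; lra | apply Hbound; lra]).
        unfold dH. nra. }
    assert (HH0 : H 0 = 0) by (unfold H; rewrite Hd0, HXat0; ring).
    assert (HHx : H x <= 0) by (rewrite HH0 in Hmvt; nra).
    unfold H in HHx. pose proof (exp_pos (- (k * x))).
    pose proof (pow2_ge_0 (d x)). pose proof (pow2_ge_0 (X x)).
    apply Rsqr_0_uniq. unfold Rsqr. nra.
Qed.

Lemma reduced_ode_unique n beta c p lo t (f g : R -> R) :
  0 < p < 1 -> 0 < lo -> 0 < t ->
  (forall z, continuous f z) -> (forall z, continuous g z) ->
  (forall r, 0 <= r <= t -> lo <= f r) -> (forall r, 0 <= r <= t -> 0 < g r) ->
  f 0 = g 0 -> reduced_ode n beta c p t f -> reduced_ode n beta c p t g ->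
  forall r, 0 <= r < t -> f r = g r.
Proof.
  intros Hp Hlo Ht Hf Hg Hflo Hgpos H0 Hodef Hodeg r Hr.
  destruct (continuity_ab_maj f 0 t ltac:(lra)
              (fun z _ => proj2 (continuity_pt_filterlim f z) (Hf z)))
    as [xf [Hxf _]].
  destruct (continuity_ab_maj g 0 t ltac:(lra)
              (fun z _ => proj2 (continuity_pt_filterlim g z) (Hg z)))
    as [xg [Hxg _]].
  set (hi := Rmax (f xf) (g xg)).
  assert (Hfb : forall r, 0 <= r <= t -> lo <= f r <= hi)
    by (intros; split; [auto | eapply Rle_trans; [apply Hxf; auto | apply Rmax_l]]).
  assert (Hgb : forall r, 0 <= r <= t -> 0 < g r <= hi)
    by (intros; split; [auto | eapply Rle_trans; [apply Hxg; auto | apply Rmax_r]]).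
  destruct (reduced_rhs_lipschitz n beta c p lo hi t Hp ltac:(pose proof (Hfb 0); lra) Ht)
    as [L [HL HLip]].
  enough (Hd : f r - g r = 0) by lra.
  apply (integral_gronwall_zero (fun x => f x - g x)
           (fun x => - reduced_rhs n beta c p f x - - reduced_rhs n beta c p g x) L t HL);
    [intros z; repeat continuity_step | lra | | | exact Hr].
  - intros x Hx. apply (is_derive_minus f g); [apply Hodef | apply Hodeg]; exact Hx.
  - intros x Hx. replace (- reduced_rhs n beta c p f x - - reduced_rhs n beta c p g x)
      with (- (reduced_rhs n beta c p f x - reduced_rhs n beta c p g x)) by ring.
    rewrite Rabs_Ropp. apply HLip; auto; lra.
Qed.

(** * Existence by Picard iteration *)

Lemma exists_pow_half_lt C e : 0 < e -> exists k, C * (1 / 2) ^ k < e.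
Proof.
  intros He. destruct (Rle_lt_dec C 0) as [HC|HC].
  { exists O. lra. }
  destruct (pow_lt_1_zero (1 / 2) ltac:(rewrite Rabs_right; lra) (e / C)) as [N HN];
    [apply Rdiv_lt_0_compat; lra|].
  exists N. specialize (HN N (Nat.le_refl _)).
  rewrite Rabs_right in HN by (apply Rle_ge, pow_le; lra).
  apply (Rmult_lt_compat_l C) in HN; [|exact HC].
  replace (C * (e / C)) with e in HN by (field; lra). exact HN.
Qed.

Section UniformPicardIteration.

Variables (T : (R -> R) -> R -> R) (psi0 : R -> R) (B : R).
Hypothesis T_continuous :
  forall psi, (forall z, continuous psi z) -> forall z, continuous (T psi) z.
Hypothesis T_contraction : forall psi1 psi2 D,
  (forall z, continuous psi1 z) -> (forall z, continuous psi2 z) ->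
  (forall t, Rabs (psi1 t - psi2 t) <= D) -> forall r, Rabs (T psi1 r - T psi2 r) <= D / 2.
Hypothesis psi0_continuous : forall z, continuous psi0 z.
Hypothesis psi0_step : forall r, Rabs (T psi0 r - psi0 r) <= B.

Fixpoint picard (k : nat) : R -> R :=
  match k with
  | O => psi0
  | S k => T (picard k)
  end.

Lemma continuous_picard k : forall z, continuous (picard k) z.
Proof. induction k as [|k IHk]; [exact psi0_continuous | exact (T_continuous _ IHk)]. Qed.

Lemma picard_step k r : Rabs (picard (S k) r - picard k r) <= B * (1 / 2) ^ k.
Proof.
  revert r. induction k as [|k IHk]; intros r.
  - rewrite Rmult_1_r. apply psi0_step.
  - eapply Rle_trans;
      [apply T_contraction;
         [apply (continuous_picard (S k)) | apply continuous_picard | exact IHk]|].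
    cbn. lra.
Qed.

Lemma picard_cauchy j k r : Rabs (picard (j + k) r - picard k r) <= 2 * B * (1 / 2) ^ k.
Proof.
  assert (HB : 0 <= B) by (eapply Rle_trans; [apply Rabs_pos | apply (psi0_step 0)]).
  assert (Hj : Rabs (picard (j + k) r - picard k r) <= 2 * B * (1 / 2) ^ k * (1 - (1 / 2) ^ j)).
  { induction j as [|j IHj].
    - cbn. rewrite Rminus_diag, Rabs_R0. lra.
    - replace (picard (S j + k) r - picard k r) with
        ((picard (S (j + k)) r - picard (j + k) r) + (picard (j + k) r - picard k r))
        by (cbn; ring).
      eapply Rle_trans; [apply Rabs_triang|].
      pose proof (picard_step (j + k) r) as Hstep. rewrite pow_add in Hstep.
      cbn [pow]. lra. }
  pose proof (pow_le (1 / 2) j ltac:(lra)). pose proof (pow_le (1 / 2) k ltac:(lra)).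
  assert (0 <= 2 * B * (1 / 2) ^ k * (1 / 2) ^ j) by (repeat apply Rmult_le_pos; lra).
  lra.
Qed.

Definition picard_limit (r : R) : R := real (Lim_seq (fun k => picard k r)).

Lemma picard_limit_correct r : is_lim_seq (fun k => picard k r) (picard_limit r).
Proof.
  assert (Hex : ex_finite_lim_seq (fun k => picard k r)).
  { apply ex_lim_seq_cauchy_corr. intros [e He].
    destruct (exists_pow_half_lt (4 * B) e He) as [N HN].
    exists N. intros a b Ha Hb. cbn.
    pose proof (picard_cauchy (a - N) N r) as Ca. pose proof (picard_cauchy (b - N) N r) as Cb.
    replace (a - N + N)%nat with a in Ca by lia. replace (b - N + N)%nat with b in Cb by lia.
    replace (picard a r - picard b r) with
      ((picard a r - picard N r) - (picard b r - picard N r)) by ring.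
    eapply Rle_lt_trans; [apply Rabs_triang|]. rewrite Rabs_Ropp. lra. }
  destruct Hex as [l Hl]. unfold picard_limit. rewrite (is_lim_seq_unique _ _ Hl). exact Hl.
Qed.

Lemma picard_limit_close k r : Rabs (picard_limit r - picard k r) <= 2 * B * (1 / 2) ^ k.
Proof.
  set (C := 2 * B * (1 / 2) ^ k).
  pose proof (picard_limit_correct r) as Hl. apply (is_lim_seq_incr_n _ k) in Hl.
  assert (Hc : forall j, picard k r - C <= picard (j + k) r <= picard k r + C)
    by (intros j; apply Rabs_le_between', picard_cauchy).
  assert (Hlo : Rbar_le (picard k r - C) (picard_limit r))
    by (apply (is_lim_seq_le _ _ _ _ (fun j => proj1 (Hc j)) (is_lim_seq_const _) Hl)).
  assert (Hhi : Rbar_le (picard_limit r) (picard k r + C))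
    by (apply (is_lim_seq_le _ _ _ _ (fun j => proj2 (Hc j)) Hl (is_lim_seq_const _))).
  cbn in Hlo, Hhi. apply Rabs_le. lra.
Qed.

Lemma continuous_picard_limit z : continuous picard_limit z.
Proof.
  apply continuous_epsilon_delta. intros e He.
  destruct (exists_pow_half_lt (2 * B) (e / 3) ltac:(lra)) as [k Hk].
  destruct (proj1 (continuous_epsilon_delta _ z) (continuous_picard k z) (e / 3) ltac:(lra))
    as [d [Hd Hy]].
  exists d. split; [exact Hd|]. intros y Hyz. specialize (Hy y Hyz).
  pose proof (picard_limit_close k y). pose proof (picard_limit_close k z).
  replace (picard_limit y - picard_limit z) with
    ((picard_limit y - picard k y) + (picard k y - picard k z) - (picard_limit z - picard k z))
    by ring.
  eapply Rle_lt_trans; [apply Rabs_triang|]. rewrite Rabs_Ropp.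
  eapply Rle_lt_trans; [apply Rplus_le_compat_r, Rabs_triang|]. lra.
Qed.

Lemma picard_limit_fixed r : T picard_limit r = picard_limit r.
Proof.
  assert (Hk : forall k, Rabs (T picard_limit r - picard_limit r) <= 2 * B * (1 / 2) ^ k).
  { intros k.
    pose proof (T_contraction _ _ _ continuous_picard_limit (continuous_picard k)
                  (fun t => picard_limit_close k t) r) as HT.
    pose proof (picard_limit_close (S k) r) as Hnext. cbn [picard pow] in Hnext.
    apply Rabs_le_between' in HT. apply Rabs_le_between' in Hnext. apply Rabs_le. lra. }
  destruct (Req_dec (T picard_limit r - picard_limit r) 0) as [H0|Hne]; [lra|].
  destruct (exists_pow_half_lt (2 * B) _ (Rabs_pos_lt _ Hne)) as [k Hlt].
  specialize (Hk k). lra.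
Qed.

Theorem picard_fixed_point : exists phi, (forall z, continuous phi z) /\ forall r, T phi r = phi r.
Proof. exists picard_limit. split; [exact continuous_picard_limit | exact picard_limit_fixed]. Qed.

End UniformPicardIteration.

Section RadialPicardOperator.

Variables (n : nat) (beta c p e0 L ep : R).
Hypothesis p_range : 0 < p < 1.
Hypothesis e0_pos : 0 < e0.
Hypothesis L_nonneg : 0 <= L.
Hypothesis L_lipschitz : forall (f g : R -> R) x,
  (forall z, continuous f z) -> (forall z, continuous g z) ->
  (forall r, 0 <= r <= 1 -> e0 / 2 <= f r <= 2 * e0) ->
  (forall r, 0 <= r <= 1 -> 0 < g r <= 2 * e0) -> 0 < x <= 1 ->
  Rabs (reduced_rhs n beta c p f x - reduced_rhs n beta c p g x) <=
  L * (Rabs (f x - g x) + RInt (fun s => Rabs (f s - g s)) 0 x).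

Let K := Rpower (2 * e0) p * ((Rabs beta + Rabs c) * (2 * e0)).

Let K_nonneg : 0 <= K.
Proof.
  pose proof (Rpower_pos (2 * e0) p). pose proof (Rabs_pos beta). pose proof (Rabs_pos c).
  unfold K. apply Rmult_le_pos; nra.
Qed.

Hypothesis ep_range : 0 < ep <= 1.
Hypothesis ep_contraction : ep * (2 * L) <= 1 / 2.
Hypothesis ep_displacement : ep * (K * ep) <= e0 / 2.

(* Clamping into [e0/2, 2 e0] makes the right-hand side globally Lipschitz; evaluating it
   at |s| makes the integrand continuous on all of R. *)
Definition picard_rhs (psi : R -> R) (s : R) : R :=
  reduced_rhs n beta c p (fun t => clamp (e0 / 2) (2 * e0) (psi t)) (Rabs s).

Definition radial_picard (psi : R -> R) (r : R) : R :=
  e0 - RInt (picard_rhs psi) 0 (clamp 0 ep r).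

Let continuous_clamped (psi : R -> R) :
  (forall z, continuous psi z) -> forall z, continuous (fun t => clamp (e0 / 2) (2 * e0) (psi t)) z.
Proof. intros Hpsi z. apply (continuous_comp psi); [apply Hpsi | apply continuous_clamp; lra]. Qed.

Let clamped_bounds (psi : R -> R) t : e0 / 2 <= clamp (e0 / 2) (2 * e0) (psi t) <= 2 * e0.
Proof. apply clamp_bounds. lra. Qed.

Lemma picard_rhs_le psi s : (forall z, continuous psi z) -> Rabs (picard_rhs psi s) <= K * Rabs s.
Proof.
  intros Hpsi. apply reduced_rhs_le; [lra | apply Rabs_pos | apply continuous_clamped, Hpsi |].
  intros t _. pose proof (clamped_bounds psi t). lra.
Qed.

Lemma continuous_picard_rhs psi : (forall z, continuous psi z) ->
  forall s, continuous (picard_rhs psi) s.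
Proof.
  intros Hpsi s. destruct (Req_dec s 0) as [->|Hs].
  - apply continuous_epsilon_delta. intros e He.
    pose proof K_nonneg.
    exists (e / (K + 1)). split; [apply Rdiv_lt_0_compat; lra|]. intros y Hy.
    unfold picard_rhs at 2. rewrite Rabs_R0. unfold reduced_rhs.
    rewrite flux_0, Rmult_0_r, Rminus_0_r.
    rewrite Rminus_0_r in Hy. eapply Rle_lt_trans; [apply picard_rhs_le, Hpsi|].
    apply (Rmult_lt_compat_r (K + 1)) in Hy; [|lra].
    replace (e / (K + 1) * (K + 1)) with e in Hy by (field; lra).
    pose proof (Rabs_pos y). nra.
  - apply (continuous_comp Rabs (reduced_rhs n beta c p _)); [apply continuous_Rabs|].
    apply continuous_reduced_rhs; [apply continuous_clamped, Hpsi | | apply Rabs_no_R0, Hs].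
    pose proof (clamped_bounds psi (Rabs s)). lra.
Qed.

Lemma continuous_radial_picard psi : (forall z, continuous psi z) ->
  forall z, continuous (radial_picard psi) z.
Proof.
  intros Hpsi z. unfold radial_picard. apply continuous_Rminus; [apply continuous_const|].
  apply (continuous_comp (clamp 0 ep) (fun y => RInt (picard_rhs psi) 0 y));
    [apply continuous_clamp; lra|].
  apply continuous_primitive, continuous_picard_rhs, Hpsi.
Qed.

Lemma radial_picard_near psi r : (forall z, continuous psi z) ->
  Rabs (radial_picard psi r - e0) <= e0 / 2.
Proof.
  intros Hpsi. unfold radial_picard.
  pose proof (clamp_bounds 0 ep r ltac:(lra)) as Hx. set (x := clamp 0 ep r) in *.
  replace (e0 - RInt (picard_rhs psi) 0 x - e0) with (- RInt (picard_rhs psi) 0 x) by ring.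
  rewrite Rabs_Ropp. eapply Rle_trans; [|exact ep_displacement].
  eapply Rle_trans.
  - apply (abs_RInt_le_const _ 0 x (K * ep));
      [lra | apply ex_RInt_continuous_R, continuous_picard_rhs, Hpsi |].
    intros t Ht. eapply Rle_trans; [apply picard_rhs_le, Hpsi|].
    rewrite Rabs_right by lra. apply Rmult_le_compat_l; [exact K_nonneg | lra].
  - apply Rmult_le_compat_r; [pose proof K_nonneg; nra | lra].
Qed.

Lemma picard_rhs_sub_le psi1 psi2 D s :
  (forall z, continuous psi1 z) -> (forall z, continuous psi2 z) ->
  (forall t, Rabs (psi1 t - psi2 t) <= D) -> 0 <= s <= ep ->
  Rabs (picard_rhs psi1 s - picard_rhs psi2 s) <= 2 * L * D.
Proof.
  intros H1 H2 HD Hs. pose proof (Rle_trans _ _ _ (Rabs_pos _) (HD 0)) as HD0.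
  unfold picard_rhs. rewrite (Rabs_right s) by lra.
  destruct (Req_dec s 0) as [->|Hs0].
  { unfold reduced_rhs. rewrite !flux_0, !Rmult_0_r, Rminus_0_r, Rabs_R0. nra. }
  set (f1 t := clamp (e0 / 2) (2 * e0) (psi1 t)). set (f2 t := clamp (e0 / 2) (2 * e0) (psi2 t)).
  assert (Hd : forall t, Rabs (f1 t - f2 t) <= D)
    by (intros t; eapply Rle_trans; [apply clamp_1_lipschitz; lra | apply HD]).
  assert (HI : RInt (fun t => Rabs (f1 t - f2 t)) 0 s <= D).
  { eapply Rle_trans; [apply Rle_abs|]. eapply Rle_trans.
    - apply abs_RInt_le_const; [lra | | intros t _; rewrite Rabs_Rabsolu; apply Hd].
      apply ex_RInt_continuous_R. intros z.
      pose proof (continuous_clamped psi1 H1). pose proof (continuous_clamped psi2 H2).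
      repeat continuity_step.
    - nra. }
  eapply Rle_trans.
  - apply (L_lipschitz f1 f2 s); [apply continuous_clamped; assumption .. | | | lra];
      intros t _; unfold f1, f2; pose proof (clamped_bounds psi1 t);
      pose proof (clamped_bounds psi2 t); lra.
  - pose proof (Hd s).
    apply Rle_trans with (L * (D + D)); [apply Rmult_le_compat_l; lra | lra].
Qed.

Lemma radial_picard_contraction psi1 psi2 D :
  (forall z, continuous psi1 z) -> (forall z, continuous psi2 z) ->
  (forall t, Rabs (psi1 t - psi2 t) <= D) ->
  forall r, Rabs (radial_picard psi1 r - radial_picard psi2 r) <= D / 2.
Proof.
  intros H1 H2 HD r. pose proof (Rle_trans _ _ _ (Rabs_pos _) (HD 0)) as HD0.
  unfold radial_picard.
  pose proof (clamp_bounds 0 ep r ltac:(lra)) as Hx. set (x := clamp 0 ep r) in *.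
  replace (e0 - RInt (picard_rhs psi1) 0 x - (e0 - RInt (picard_rhs psi2) 0 x))
    with (- RInt (fun s => picard_rhs psi1 s - picard_rhs psi2 s) 0 x)
    by (rewrite RInt_minus_R by (apply ex_RInt_continuous_R, continuous_picard_rhs; assumption);
        ring).
  rewrite Rabs_Ropp. eapply Rle_trans.
  - apply (abs_RInt_le_const _ 0 x (2 * L * D));
      [lra | | intros; apply picard_rhs_sub_le; auto; lra].
    apply ex_RInt_continuous_R. intros z.
    pose proof (continuous_picard_rhs psi1 H1). pose proof (continuous_picard_rhs psi2 H2).
    repeat continuity_step.
  - assert ((x - 0) * (2 * L * D) <= ep * (2 * L) * D)
      by (replace (ep * (2 * L) * D) with (ep * (2 * L * D)) by ring;
          apply Rmult_le_compat_r; [nra | lra]).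
    nra.
Qed.

Lemma radial_picard_fixed_point : exists phi, (forall z, continuous phi z) /\ phi 0 = e0 /\
  (forall r, Rabs (phi r - e0) <= e0 / 2) /\ reduced_ode n beta c p ep phi.
Proof.
  destruct (picard_fixed_point radial_picard (fun _ => e0) (e0 / 2)) as [phi [Hc Hfix]].
  - exact continuous_radial_picard.
  - exact radial_picard_contraction.
  - intros; apply continuous_const.
  - intros r. apply radial_picard_near. intros; apply continuous_const.
  - assert (Hnear : forall r, Rabs (phi r - e0) <= e0 / 2)
      by (intros r; rewrite <- Hfix; apply radial_picard_near, Hc).
    assert (Hclamp : forall t, clamp (e0 / 2) (2 * e0) (phi t) = phi t)
      by (intros t; apply clamp_id; specialize (Hnear t); apply Rabs_le_between' in Hnear; lra).
    exists phi. split; [exact Hc | split; [|split; [exact Hnear|]]].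
    + rewrite <- Hfix. unfold radial_picard. rewrite clamp_id, RInt_point_R by lra.
      apply Rminus_0_r.
    + intros r Hr.
      apply (is_derive_ext_loc (fun y => e0 - RInt (picard_rhs phi) 0 y)).
      { apply (locally_of_interval 0 ep); [exact Hr|]. intros y Hy.
        rewrite <- Hfix. unfold radial_picard. rewrite clamp_id by lra. reflexivity. }
      replace (- reduced_rhs n beta c p phi r) with (0 - picard_rhs phi r).
      * apply (is_derive_minus (fun _ => e0) (fun y => RInt (picard_rhs phi) 0 y));
          [apply is_derive_Reals, derivable_pt_lim_const
          | apply is_derive_primitive, continuous_picard_rhs, Hc].
      * unfold picard_rhs, reduced_rhs. rewrite Rabs_right, Hclamp by lra.
        rewrite (flux_ext _ _ _ _ phi) by exact Hclamp. ring.
Qed.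

End RadialPicardOperator.

Lemma reduced_ode_exists n beta c p e0 : 0 < p < 1 -> 0 < e0 ->
  exists ep, 0 < ep /\ exists phi, (forall z, continuous phi z) /\ phi 0 = e0 /\
    (forall r, Rabs (phi r - e0) <= e0 / 2) /\ reduced_ode n beta c p ep phi.
Proof.
  intros Hp He0.
  destruct (reduced_rhs_lipschitz n beta c p (e0 / 2) (2 * e0) 1 Hp ltac:(lra) Rlt_0_1)
    as [L [HL HLip]].
  set (K := Rpower (2 * e0) p * ((Rabs beta + Rabs c) * (2 * e0))).
  assert (HK : 0 <= K).
  { pose proof (Rpower_pos (2 * e0) p). pose proof (Rabs_pos beta). pose proof (Rabs_pos c).
    unfold K. apply Rmult_le_pos; nra. }
  set (ep := Rmin 1 (Rmin (1 / (4 * L + 1)) (e0 / (2 * K + 1)))).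
  assert (Hep1 : ep <= 1) by apply Rmin_l.
  assert (HepL : ep * (4 * L + 1) <= 1).
  { apply (Rmult_le_reg_r (/ (4 * L + 1))); [apply Rinv_0_lt_compat; lra|].
    rewrite Rmult_assoc, Rinv_r, Rmult_1_r by lra.
    eapply Rle_trans; [apply Rmin_r | eapply Rle_trans; [apply Rmin_l | lra]]. }
  assert (HepK : ep * (2 * K + 1) <= e0).
  { apply (Rmult_le_reg_r (/ (2 * K + 1))); [apply Rinv_0_lt_compat; lra|].
    rewrite Rmult_assoc, Rinv_r, Rmult_1_r by lra.
    eapply Rle_trans; [apply Rmin_r | eapply Rle_trans; [apply Rmin_r | unfold Rdiv; lra]]. }
  assert (Hep : 0 < ep).
  { unfold ep. repeat apply Rmin_glb_lt; try lra; apply Rdiv_lt_0_compat; lra. }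
  exists ep. split; [exact Hep|].
  assert (ep * (K * ep) <= ep * K).
  { rewrite <- (Rmult_1_r (ep * K)), <- Rmult_assoc.
    apply Rmult_le_compat_l; [apply Rmult_le_pos |]; lra. }
  apply (radial_picard_fixed_point n beta c p e0 L ep); auto; fold K; nra.
Qed.

Lemma radial_sol_unique n m alpha beta eta0 eps lo (phi g : R -> R) :
  (1 <= n)%nat -> 0 < m < 1 -> 0 < lo ->
  (forall z, continuous phi z) -> (forall r, 0 <= r < eps -> lo <= phi r) -> phi 0 = eta0 ->
  reduced_ode n beta (alpha - INR n * beta) (1 - m) eps phi ->
  radial_sol n m alpha beta eta0 eps g -> forall r, 0 <= r < eps -> g r = phi r.
Proof.
  intros Hn Hm Hlo Hc Hphi_lo Hphi0 Hode Hg r Hr.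
  set (t := (r + eps) / 2). assert (Ht : 0 < t < eps) by (unfold t; lra).
  assert (Hrt : r < t) by (unfold t; lra).
  destruct (radial_sol_reduced_ode n m alpha beta eta0 eps g t Hn ltac:(lra) Ht Hg)
    as [Hgc Hgode].
  destruct Hg as [_ [_ [Hgpos [Hg0 _]]]].
  replace (g r) with (g (clamp 0 t r)) by (rewrite clamp_id; lra). symmetry.
  apply (reduced_ode_unique n beta (alpha - INR n * beta) (1 - m) lo t phi
           (fun x => g (clamp 0 t x))); auto; try lra.
  - intros x Hx. apply Hphi_lo. lra.
  - intros x Hx. apply Hgpos. pose proof (clamp_bounds 0 t x). lra.
  - rewrite clamp_id, Hg0 by lra. exact Hphi0.
  - intros x Hx. apply Hode. lra.
Qed.

Theorem lemma2p1 (n : nat) (m eta0 rho1 beta alpha : R) :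
  (3 <= n)%nat ->
  0 < m -> m < (INR n - 2) / INR n ->
  0 < eta0 -> 0 < rho1 ->
  beta < m * rho1 / (INR n - 2 - INR n * m) ->
  alpha = (2 * beta + rho1) / (1 - m) ->
  exists eps : R, 0 < eps /\
    exists f : R -> R,
      radial_sol n m alpha beta eta0 eps f /\
      (forall g : R -> R, radial_sol n m alpha beta eta0 eps g ->
         forall r, 0 <= r < eps -> g r = f r).
Proof.
  intros Hn Hm Hmn Heta _ _ _.
  assert (Hn1 : (1 <= n)%nat) by lia.
  assert (Hm1 : m < 1).
  { assert (HnR : 3 <= INR n) by (replace 3 with (INR 3) by (cbn; ring); apply le_INR, Hn).
    assert ((INR n - 2) / INR n < 1) by (apply Rlt_div_l; lra). lra. }
  destruct (reduced_ode_exists n beta (alpha - INR n * beta) (1 - m) eta0 ltac:(lra) Heta)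
    as [eps [Heps [phi [Hc [Hphi0 [Hnear Hode]]]]]].
  assert (Hbounds : forall r, eta0 / 2 <= phi r <= 3 * eta0 / 2)
    by (intros r; specialize (Hnear r); apply Rabs_le_between' in Hnear; lra).
  exists eps. split; [exact Heps|]. exists phi. split.
  - apply (reduced_ode_radial_sol n m alpha beta eps (eta0 / 2) (3 * eta0 / 2)); auto; lra.
  - intros g Hg. apply (radial_sol_unique n m alpha beta eta0 eps (eta0 / 2)); auto; try lra.
    intros r _. apply Hbounds.
Qed.
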